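(* Fix a task $(\mathcal{S},\mathcal{A},\_,d_0,\mathcal{R},\gamma)$. For every transition model $\mathcal{T}$ (such that all states are reachable) and every $c\in\mathbb{R}$, the level set $\{\pi\in\Pi^+ : J_{\mathcal{T}}(\pi)=c\}$ is connected.
   Context: Setting: finite $\mathcal{S}$, finite $\mathcal{A}$ with $|\mathcal{A}|>1$, $d_0\in\Delta(\mathcal{S})$, $\mathcal{R}:\mathcal{S}\times\mathcal{A}\to\mathbb{R}$, $\gamma\in[0,1)$; a task is an MDP without its transition model, and all states are assumed reachable from $d_0$ under $\mathcal{T}$. Stationary policies $\pi:\mathcal{S}\to\Delta(\mathcal{A})$ are identified with $\Delta(\mathcal{A})^{|\mathcal{S}|}\subset\mathbb{R}^{\mathcal{S}\times\mathcal{A}}$; $\Pi^+$ is the set of those with $\pi(a\mid s)>0$ for all $s,a$. $J_{\mathcal{T}}(\pi)=\mathbb{E}\big[\sum_{t\ge0}\gamma^t\mathcal{R}(s_t,a_t)\big]$ with $s_0\sim d_0$, $a_t\sim\pi(\cdot\mid s_t)$, $s_{t+1}\sim\mathcal{T}(\cdot\mid s_t,a_t)$. *)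

From HB Require Import structures.
From mathcomp Require Import all_boot all_order all_algebra.
From mathcomp Require Import all_classical all_reals all_analysis.
Set Implicit Arguments. Unset Strict Implicit. Unset Printing Implicit Defensive.
Import Order.TTheory GRing.Theory Num.Theory.
Local Open Scope ring_scope.

(* States are 'I_n, actions are 'I_m.  Policies are matrices pi : 'M[R]_(n,m),
   pi s a = pi(a|s), i.e. elements of R^{S x A}. *)

Definition is_dist (R : realType) (n : nat) (d : 'I_n -> R) : Prop :=
  (forall s, 0 <= d s) /\ \sum_(s < n) d s = 1.

Definition is_transition (R : realType) (n m : nat)
  (T : 'I_n -> 'I_m -> 'I_n -> R) : Prop :=
  forall s a, is_dist (T s a).

Definition is_pos_policy (R : realType) (n m : nat) (pi : 'M[R]_(n, m)) : Prop :=
  (forall s a, 0 < pi s a) /\ (forall s, \sum_(a < m) pi s a = 1).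

Definition all_reachable (R : realType) (n m : nat) (d0 : 'I_n -> R)
  (T : 'I_n -> 'I_m -> 'I_n -> R) : Prop :=
  forall s : 'I_n, exists s0 : 'I_n,
    0 < d0 s0 /\ connect (fun x y : 'I_n => [exists a : 'I_m, 0 < T x a y]) s0 s.

Definition Ppi (R : realType) (n m : nat) (T : 'I_n -> 'I_m -> 'I_n -> R)
  (pi : 'M[R]_(n, m)) : 'M[R]_n :=
  \matrix_(s, s') \sum_(a < m) pi s a * T s a s'.

Definition exp_reward_t (R : realType) (n m : nat) (d0 : 'I_n -> R)
  (Rw : 'I_n -> 'I_m -> R) (T : 'I_n -> 'I_m -> 'I_n -> R)
  (pi : 'M[R]_(n, m)) (t : nat) : R :=
  let dt := (\row_s d0 s) *m (Ppi T pi) ^+ t in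
  \sum_(s < n) dt 0 s * \sum_(a < m) pi s a * Rw s a.

Definition J (R : realType) (n m : nat) (d0 : 'I_n -> R)
  (Rw : 'I_n -> 'I_m -> R) (gamma : R) (T : 'I_n -> 'I_m -> 'I_n -> R)
  (pi : 'M[R]_(n, m)) : R :=
  limn (fun N => \sum_(0 <= t < N) gamma ^+ t * exp_reward_t d0 Rw T pi t).

From HB Require Import structures.
From mathcomp Require Import all_boot all_order all_algebra.
From mathcomp Require Import all_classical all_reals all_analysis.
From mathcomp Require Import ring lra.
Import Order.TTheory GRing.Theory Num.Theory.
Import numFieldNormedType.Exports.
Local Open Scope classical_set_scope.
Local Open Scope ring_scope.
Set Implicit Arguments. Unset Strict Implicit. Unset Printing Implicit Defensive.

(* Let mu_pi = d0 (1 - gamma P_pi)^-1 be the discounted state occupancy of a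
   policy pi and eta_pi(s, a) = pi(a|s) mu_pi(s) its state-action occupancy.
   Then J(pi) = sum eta_pi R is linear in eta_pi, and eta_pi satisfies linear
   flow equations.  When gamma > 0 and every state is reachable, mu_pi > 0, so
   pi is recovered from eta_pi by normalizing rows: the level set of J in Pi^+
   is the image, under the continuous row normalization, of a convex set of
   positive flow solutions, hence connected.  When gamma = 0, J is affine in pi
   and the level set is itself convex. *)

Lemma convex_connected (R : realType) (V : normedModType R) (A : set V) :
  (forall x y t, A x -> A y -> 0 <= t <= 1 -> A ((1 - t) *: x + t *: y)) ->
  connected A.
Proof.
move=> convA; have [->|/set0P[x Ax]] := eqVneq A set0; first exact: connected0.
pose seg y := (fun t : R => (1 - t) *: x + t *: y) @` `[0, 1].
have -> : A = \bigcup_(y in A) seg y.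
  apply/seteqP; split=> [y Ay|_ [y Ay [t t01 <-]]].
    exists y => //; exists 1; first by rewrite /= in_itv /= lexx ler01.
    by rewrite subrr scale0r add0r scale1r.
  by apply: convA; rewrite // -in_itv.
apply: bigcup_connected.
  exists x => y _; exists 0; first by rewrite /= in_itv /= lexx ler01.
  by rewrite subr0 scale1r scale0r addr0.
move=> y _; apply: connected_continuous_connected; first exact: segment_connected.
apply: continuous_subspaceT => t.
apply: cvgD; apply: cvgZ; try exact: cvg_cst; try exact: cvg_id.
by apply: cvgB; [exact: cvg_cst | exact: cvg_id].
Qed.

Lemma mx_continuous_at (U : topologicalType) (T : topologicalType) (m n : nat)
    (f : U -> 'M[T]_(m, n)) (x : U) :
  (forall i j, {for x, continuous (fun y => f y i j)}) -> {for x, continuous f}.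
Proof.
move=> fx A [P Pf PA]; apply: filterS PA _ => /=.
apply: (@filter_forall _ 'I_m (fun i y => forall j, P i j (f y i j))) => i.
apply: (@filter_forall _ 'I_n (fun j y => P i j (f y i j))) => j.
exact: (fx i j _ (Pf i j)).
Qed.

Lemma sumr_lincomb (R : comPzRingType) (I : Type) (r : seq I) (P : pred I)
    (a b : R) (F G : I -> R) :
  \sum_(i <- r | P i) (a * F i + b * G i) =
  a * \sum_(i <- r | P i) F i + b * \sum_(i <- r | P i) G i.
Proof. by rewrite big_split /= -!mulr_sumr. Qed.

Section stochastic_matrices.
Variables (R : realFieldType) (n : nat).
Implicit Types (P : 'M[R]_n) (v : 'rV[R]_n).

Definition row_stochastic P : Prop :=
  (forall i j, 0 <= P i j) /\ (forall i, \sum_j P i j = 1).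

Lemma sum_mulmx_stochastic P v :
  row_stochastic P -> \sum_j (v *m P) 0 j = \sum_i v 0 i.
Proof.
move=> [_ P1]; under eq_bigr => j _ do rewrite mxE.
by rewrite exchange_big; apply: eq_bigr => i _; rewrite -mulr_sumr P1 mulr1.
Qed.

Lemma l1_mulmx_stochastic P v :
  row_stochastic P -> \sum_j `|(v *m P) 0 j| <= \sum_i `|v 0 i|.
Proof.
move=> sP; have [P0 _] := sP.
have -> : \sum_i `|v 0 i| = \sum_j ((\row_i `|v 0 i|) *m P) 0 j.
  by rewrite sum_mulmx_stochastic //; apply: eq_bigr => i _; rewrite mxE.
apply: ler_sum => j _; rewrite !mxE; apply: le_trans (ler_norm_sum _ _ _) _.
by apply: ler_sum => i _; rewrite mxE normrM (ger0_norm (P0 _ _)).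
Qed.

Section discounted_flow.
Variables (P : 'M[R]_n) (g : R).
Hypotheses (sP : row_stochastic P) (g0 : 0 <= g) (g1 : g < 1).

Lemma discounted_fixpoint_eq0 v : v = g *: (v *m P) -> v = 0.
Proof.
move=> hv; have l1v : \sum_i `|v 0 i| <= g * \sum_i `|v 0 i|.
  rewrite {1}hv; under eq_bigr => j _ do rewrite mxE normrM (ger0_norm g0).
  by rewrite -mulr_sumr ler_wpM2l // l1_mulmx_stochastic.
have l1v_ge0 : 0 <= \sum_i `|v 0 i| by apply: sumr_ge0.
have l1v0 : \sum_i `|v 0 i| = 0.
  have g1' : 0 < 1 - g by rewrite subr_gt0.
  apply/eqP; rewrite eq_le l1v_ge0 andbT -(pmulr_rle0 _ g1').
  by rewrite mulrBl mul1r subr_le0.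
apply/rowP => j; apply/eqP; rewrite mxE -normr_eq0; apply/eqP.
exact: (psumr_eq0P (fun i _ => normr_ge0 (v 0 i)) l1v0).
Qed.

Lemma discounted_resolvent_unitmx : 1%:M - g *: P \in unitmx.
Proof.
rewrite -row_free_unit; apply: inj_row_free => v.
rewrite mulmxBr mulmx1 -scalemxAr => /eqP; rewrite subr_eq0 => /eqP.
exact: discounted_fixpoint_eq0.
Qed.

Lemma discounted_flow_exists (d : 'rV[R]_n) : exists mu, mu = d + g *: (mu *m P).
Proof.
exists (d *m invmx (1%:M - g *: P)).
have := @mulmxKV _ _ 1 _ discounted_resolvent_unitmx d.
by rewrite mulmxBr mulmx1 -scalemxAr => /(canRL (subrK _)).
Qed.

Variables (d mu : 'rV[R]_n).
Hypotheses (d0 : forall j, 0 <= d 0 j) (hmu : mu = d + g *: (mu *m P)).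

Lemma discounted_flowE j : mu 0 j = d 0 j + g * (mu *m P) 0 j.
Proof. by rewrite {1}hmu !mxE. Qed.

(* The negative part [nu] of [mu] satisfies [g nu P <= nu] entrywise; since
   [P] preserves total mass and [g < 1], the total mass of [nu] is zero. *)
Lemma discounted_flow_ge0 j : 0 <= mu 0 j.
Proof.
have [P0 _] := sP; pose nu := \row_i Num.min (mu 0 i) 0.
have nu_le0 i : nu 0 i <= 0 by rewrite mxE ge_min lexx orbT.
have nu_sub j' : g * (nu *m P) 0 j' <= nu 0 j'.
  have nuP_le0 : (nu *m P) 0 j' <= 0.
    by rewrite mxE; apply: sumr_le0 => i _; apply: mulr_le0_ge0.
  rewrite [nu 0 j']mxE; case: (leP 0 (mu 0 j')) => [_|mu_neg].
    by apply: mulr_ge0_le0.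
  rewrite discounted_flowE -[X in X <= _]add0r; apply: lerD => //.
  apply: ler_wpM2l => //; rewrite !mxE; apply: ler_sum => i _.
  by apply: ler_wpM2r => //; rewrite mxE ge_min lexx.
have nu_sum_ge0 : 0 <= \sum_i nu 0 i.
  rewrite -(pmulr_rge0 _ (_ : 0 < 1 - g)) ?subr_gt0 // mulrBl mul1r subr_ge0.
  rewrite -{1}(sum_mulmx_stochastic nu sP) mulr_sumr; exact: ler_sum.
have : \sum_i nu 0 i <= nu 0 j.
  rewrite (bigD1 j) //= gerDl; apply: sumr_le0 => i _; exact: nu_le0.
by move=> /(le_trans nu_sum_ge0); rewrite mxE le_min => /andP[].
Qed.

Lemma discounted_flow_ge_mul j k : g * (mu 0 j * P j k) <= mu 0 k.
Proof.
have [P0 _] := sP.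
rewrite [mu 0 k]discounted_flowE -[X in X <= _]add0r; apply: lerD; first exact: d0.
apply: ler_wpM2l => //; rewrite mxE (bigD1 j) //= lerDl.
by apply: sumr_ge0 => i _; apply: mulr_ge0; [exact: discounted_flow_ge0 | exact: P0].
Qed.

Lemma discounted_flow_gt0 s0 s : 0 < g -> 0 < d 0 s0 ->
  connect (fun x y => 0 < P x y) s0 s -> 0 < mu 0 s.
Proof.
move=> gpos ds0 /connectP[p]; have [P0 _] := sP.
have mu_s0 : 0 < mu 0 s0.
  apply: lt_le_trans ds0 _; rewrite discounted_flowE lerDl mulr_ge0 // mxE.
  by apply: sumr_ge0 => i _; apply: mulr_ge0; [exact: discounted_flow_ge0 | exact: P0].
elim: p s0 {ds0} mu_s0 => [|y p IHp] x mu_x /=; first by move=> _ ->.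
move=> /andP[Pxy p_path] s_last; apply: IHp p_path s_last.
by apply: lt_le_trans (discounted_flow_ge_mul x y); rewrite !mulr_gt0.
Qed.

End discounted_flow.
End stochastic_matrices.

Definition expect (R : pzRingType) (n : nat) (v : 'rV[R]_n) (r : 'I_n -> R) : R :=
  \sum_s v 0 s * r s.

Lemma expectD (R : comPzRingType) (n : nat) (u v : 'rV[R]_n) r :
  expect (u + v) r = expect u r + expect v r.
Proof. by rewrite /expect -big_split; apply: eq_bigr => s _; rewrite mxE mulrDl. Qed.

Lemma expectZ (R : comPzRingType) (n : nat) (k : R) (v : 'rV[R]_n) r :
  expect (k *: v) r = k * expect v r.
Proof. by rewrite /expect mulr_sumr; apply: eq_bigr => s _; rewrite mxE mulrA. Qed.

Lemma norm_expect_le (R : realDomainType) (n : nat) (v : 'rV[R]_n) r :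
  `|expect v r| <= (\sum_s `|v 0 s|) * \sum_s `|r s|.
Proof.
apply: le_trans (ler_norm_sum _ _ _) _; rewrite mulr_suml; apply: ler_sum => s _.
rewrite normrM ler_wpM2l // (bigD1 s) //= lerDl.
by apply: sumr_ge0 => i _.
Qed.

Section discounted_series.
Variables (R : realType) (n : nat) (P : 'M[R]_n) (g : R) (d mu : 'rV[R]_n).
Variable r : 'I_n -> R.
Hypotheses (sP : row_stochastic P) (g0 : 0 <= g) (g1 : g < 1).
Hypothesis hmu : mu = d + g *: (mu *m P).

Lemma discounted_flow_expansion N :
  expect mu r = \sum_(0 <= t < N) g ^+ t * expect (d *m P ^+ t) r
                + g ^+ N * expect (mu *m P ^+ N) r.
Proof.
elim: N => [|N IHN]; first by rewrite big_nil add0r expr0 mul1r mulmx1.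
rewrite IHN big_nat_recr //= -addrA; congr (_ + _).
have -> : mu *m P ^+ N = d *m P ^+ N + g *: (mu *m P ^+ N.+1).
  by rewrite {1}hmu mulmxDl -scalemxAl -mulmxA exprS.
by rewrite expectD expectZ mulrDr [g ^+ N.+1]exprSr mulrA.
Qed.

Lemma discounted_series_cvg :
  (fun N => \sum_(0 <= t < N) g ^+ t * expect (d *m P ^+ t) r) @ \oo -->
  expect mu r.
Proof.
pose K := (\sum_s `|mu 0 s|) * \sum_s `|r s|.
have remainder_le N : `|g ^+ N * expect (mu *m P ^+ N) r| <= g ^+ N * K.
  rewrite normrM ger0_norm ?exprn_ge0 // ler_wpM2l ?exprn_ge0 //.
  apply: le_trans (norm_expect_le _ _) _; rewrite ler_wpM2r ?sumr_ge0 //.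
  elim: N => [|N IHN]; first by rewrite mulmx1.
  by rewrite exprSr mulmxA; apply: le_trans IHN; exact: l1_mulmx_stochastic.
have remainder0 : (fun N => g ^+ N * expect (mu *m P ^+ N) r) @ \oo --> 0.
  apply: norm_cvg0; apply: (@squeeze_cvgr _ _ _ _ (cst 0) (fun N => g ^+ N * K)).
  - by apply: nearW => N; rewrite normr_ge0 remainder_le.
  - exact: cvg_cst.
  - rewrite -(mul0r K); apply: cvgM; last exact: cvg_cst.
    by apply: cvg_expr; rewrite ger0_norm.
have -> : (fun N => \sum_(0 <= t < N) g ^+ t * expect (d *m P ^+ t) r) =
    (fun N => expect mu r - g ^+ N * expect (mu *m P ^+ N) r).
  by apply: funext => N; rewrite (discounted_flow_expansion N) addrK.
rewrite -[X in _ --> X]subr0; apply: cvgB => //; exact: cvg_cst.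
Qed.

End discounted_series.

Section policies.
Variables (R : realType) (n m : nat) (d0 : 'I_n -> R) (Rw : 'I_n -> 'I_m -> R).
Variables (T : 'I_n -> 'I_m -> 'I_n -> R).
Hypothesis hT : is_transition T.
Implicit Types (pi eta : 'M[R]_(n, m)).

Definition policy_reward pi (s : 'I_n) : R := \sum_(a < m) pi s a * Rw s a.

Lemma policy_reward_lincomb a b pi1 pi2 s :
  policy_reward (a *: pi1 + b *: pi2) s =
  a * policy_reward pi1 s + b * policy_reward pi2 s.
Proof.
rewrite /policy_reward -sumr_lincomb; apply: eq_bigr => i _.
by rewrite !mxE mulrDl !mulrA.
Qed.

Lemma row_stochastic_Ppi pi :
  (forall s a, 0 <= pi s a) -> (forall s, \sum_(a < m) pi s a = 1) ->
  row_stochastic (Ppi T pi).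
Proof.
move=> pi0 pi1; split=> [s s'|s].
  by rewrite mxE; apply: sumr_ge0 => a _; apply: mulr_ge0 => //; case: (hT s a).
under eq_bigr => s' _ do rewrite mxE.
rewrite exchange_big /= -[RHS](pi1 s); apply: eq_bigr => a _.
by rewrite -mulr_sumr; case: (hT s a) => _ ->; rewrite mulr1.
Qed.

Lemma Ppi_gt0 pi x a y : (forall s b, 0 < pi s b) -> 0 < T x a y ->
  0 < Ppi T pi x y.
Proof.
move=> pi_gt0 Txay; rewrite mxE (bigD1 a) //= ltr_pwDl ?mulr_gt0 //.
by apply: sumr_ge0 => b _; apply: mulr_ge0; [exact: ltW | case: (hT x b)].
Qed.

Lemma J_discounted_flow g pi (mu : 'rV[R]_n) : 0 <= g -> g < 1 ->
  row_stochastic (Ppi T pi) -> mu = \row_s d0 s + g *: (mu *m Ppi T pi) ->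
  J d0 Rw g T pi = expect mu (policy_reward pi).
Proof.
(* [exp_reward_t d0 Rw T pi t] unfolds to [expect (d0 P^t) (policy_reward pi)]. *)
by move=> g0 g1 sP hmu; apply: cvg_lim => //; exact: discounted_series_cvg.
Qed.

Lemma J_myopic pi :
  (forall s a, 0 <= pi s a) -> (forall s, \sum_(a < m) pi s a = 1) ->
  J d0 Rw 0 T pi = \sum_s d0 s * policy_reward pi s.
Proof.
move=> pi0 pi1; rewrite (@J_discounted_flow 0 pi (\row_s d0 s)) ?ltr01 //.
- by apply: eq_bigr => s _; rewrite mxE.
- exact: row_stochastic_Ppi.
- by rewrite scale0r addr0.
Qed.

Lemma pos_policy_segment pi1 pi2 t :
  is_pos_policy pi1 -> is_pos_policy pi2 -> 0 <= t <= 1 ->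
  is_pos_policy ((1 - t) *: pi1 + t *: pi2).
Proof.
move=> [p1_gt0 p1_sum] [p2_gt0 p2_sum] /andP[t0 t1]; split=> [s a|s].
  by rewrite !mxE; have := p1_gt0 s a; have := p2_gt0 s a; nra.
under eq_bigr => a _ do rewrite !mxE.
by rewrite sumr_lincomb p1_sum p2_sum !mulr1 subrK.
Qed.

Lemma myopic_level_segment c pi1 pi2 t :
  is_pos_policy pi1 -> J d0 Rw 0 T pi1 = c ->
  is_pos_policy pi2 -> J d0 Rw 0 T pi2 = c -> 0 <= t <= 1 ->
  J d0 Rw 0 T ((1 - t) *: pi1 + t *: pi2) = c.
Proof.
move=> pp1 J1 pp2 J2 t01; have [p_gt0 p_sum] := pos_policy_segment pp1 pp2 t01.
have [[p1_gt0 p1_sum] [p2_gt0 p2_sum]] := (pp1, pp2).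
rewrite J_myopic // => [|s a]; last exact: ltW.
rewrite J_myopic // in J1 => [|s a]; last exact: ltW.
rewrite J_myopic // in J2 => [|s a]; last exact: ltW.
under eq_bigr => s _ do rewrite policy_reward_lincomb mulrDr mulrCA [_ * (t * _)]mulrCA.
by rewrite sumr_lincomb J1 J2 -mulrDl subrK mul1r.
Qed.

Definition occupancy_measure (g : R) eta : Prop :=
  (forall s a, 0 < eta s a) /\
  (forall s', \sum_(a < m) eta s' a =
              d0 s' + g * \sum_s \sum_(a < m) T s a s' * eta s a).

Definition occupancy_value eta : R := \sum_s \sum_(a < m) eta s a * Rw s a.

Definition policy_of eta : 'M[R]_(n, m) :=
  \matrix_(s, a) (eta s a / \sum_(b < m) eta s b).

Section occupancy.
Variable g : R.
Hypotheses (g0 : 0 <= g) (g1 : g < 1).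

Lemma occupancy_of_policy pi : 0 < g -> is_dist d0 -> all_reachable d0 T ->
  is_pos_policy pi ->
  exists eta, [/\ occupancy_measure g eta, occupancy_value eta = J d0 Rw g T pi
                & policy_of eta = pi].
Proof.
move=> gpos [d0_ge0 _] reach [pi_gt0 pi_sum].
have sP : row_stochastic (Ppi T pi).
  by apply: row_stochastic_Ppi => // s a; exact: ltW.
have [mu hmu] := discounted_flow_exists sP g0 g1 (\row_s d0 s).
have d_ge0 j : 0 <= (\row_s d0 s) 0 j by rewrite mxE.
have mu_gt0 s : 0 < mu 0 s.
  have [s0 [d0s0 s0s]] := reach s.
  apply: (discounted_flow_gt0 sP g0 g1 d_ge0 hmu gpos (s0 := s0)).
    by rewrite mxE.
  apply: connect_sub s0s => x y /existsP[a Txay].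
  exact/connect1/(Ppi_gt0 pi_gt0 Txay).
exists (\matrix_(s, a) (pi s a * mu 0 s)); split.
- split=> [s a|s']; first by rewrite mxE mulr_gt0.
  under eq_bigr => a _ do rewrite mxE.
  rewrite -mulr_suml pi_sum mul1r (discounted_flowE hmu) mxE; congr (_ + _ * _).
  rewrite mxE; apply: eq_bigr => s _; rewrite mxE mulr_sumr; apply: eq_bigr => a _.
  by rewrite mxE; ring.
- rewrite (J_discounted_flow g0 g1 sP hmu); apply: eq_bigr => s _.
  rewrite mulr_sumr; apply: eq_bigr => a _; rewrite mxE; ring.
- apply/matrixP => s a; rewrite !mxE.
  under eq_bigr => b _ do rewrite mxE.
  by rewrite -mulr_suml pi_sum mul1r mulfK // gt_eqF.
Qed.

Lemma occupancy_measure_segment eta1 eta2 t :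
  occupancy_measure g eta1 -> occupancy_measure g eta2 -> 0 <= t <= 1 ->
  occupancy_measure g ((1 - t) *: eta1 + t *: eta2).
Proof.
move=> [e1_gt0 e1_flow] [e2_gt0 e2_flow] /andP[t0 t1]; split=> [s a|s'].
  by rewrite !mxE; have := e1_gt0 s a; have := e2_gt0 s a; nra.
under eq_bigr => a _ do rewrite !mxE.
under [in RHS]eq_bigr => s _ do under eq_bigr => a _ do
  rewrite !mxE mulrDr mulrCA [T s a s' * (t * _)]mulrCA.
under [in RHS]eq_bigr => s _ do rewrite sumr_lincomb.
rewrite !sumr_lincomb e1_flow e2_flow; ring.
Qed.

Lemma occupancy_value_lincomb a b eta1 eta2 :
  occupancy_value (a *: eta1 + b *: eta2) =
  a * occupancy_value eta1 + b * occupancy_value eta2.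
Proof.
rewrite /occupancy_value -sumr_lincomb; apply: eq_bigr => s _.
rewrite -sumr_lincomb; apply: eq_bigr => i _.
by rewrite !mxE mulrDl !mulrA.
Qed.

Hypothesis m_gt0 : (0 < m)%N.

Lemma sum_actions_gt0 eta s : (forall a, 0 < eta s a) -> 0 < \sum_(a < m) eta s a.
Proof.
move=> eta_gt0; rewrite (bigD1 (Ordinal m_gt0)) //= ltr_pwDl //.
by apply: sumr_ge0 => a _; exact: ltW.
Qed.

Lemma policy_ofK eta s a : (forall b, 0 < eta s b) ->
  (\sum_(b < m) eta s b) * policy_of eta s a = eta s a.
Proof. by move=> /sum_actions_gt0 sum_gt0; rewrite mxE mulrC divfK // gt_eqF. Qed.

Lemma policy_of_pos eta : (forall s a, 0 < eta s a) -> is_pos_policy (policy_of eta).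
Proof.
move=> eta_gt0; have sum_gt0 s := sum_actions_gt0 (eta_gt0 s).
split=> [s a|s]; first by rewrite mxE divr_gt0.
under eq_bigr => a _ do rewrite mxE.
by rewrite -mulr_suml divff // gt_eqF.
Qed.

(* The row sums of [eta] form the discounted state flow of [policy_of eta]. *)
Lemma J_policy_of eta : occupancy_measure g eta ->
  J d0 Rw g T (policy_of eta) = occupancy_value eta.
Proof.
move=> [eta_gt0 eta_flow]; have [pi_gt0 pi_sum] := policy_of_pos eta_gt0.
have sP : row_stochastic (Ppi T (policy_of eta)).
  by apply: row_stochastic_Ppi => // s a; exact: ltW.
rewrite (@J_discounted_flow g _ (\row_s \sum_(b < m) eta s b)) //.
  apply: eq_bigr => s _; rewrite mxE mulr_sumr; apply: eq_bigr => a _.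
  by rewrite mulrA policy_ofK.
apply/rowP => s'; rewrite !mxE eta_flow; congr (_ + _ * _).
apply: eq_bigr => s _; rewrite !mxE mulr_sumr; apply: eq_bigr => a _.
by rewrite mulrA policy_ofK // mulrC.
Qed.

Lemma policy_of_continuous eta : (forall s a, 0 < eta s a) ->
  {for eta, continuous policy_of}.
Proof.
move=> eta_gt0; apply: mx_continuous_at => s a.
have -> : (fun e => policy_of e s a) = (fun e => e s a * (\sum_(b < m) e s b)^-1).
  by apply: funext => e; rewrite mxE.
apply: continuousM; first exact: coord_continuous.
apply: continuousV; first by rewrite gt_eqF // sum_actions_gt0.
apply: (@continuous_big _ _ +%R 0 predT add_continuous) => b _.
exact: coord_continuous.
Qed.

Lemma level_set_policy_of c : 0 < g -> is_dist d0 -> all_reachable d0 T ->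
  [set pi | is_pos_policy pi /\ J d0 Rw g T pi = c] =
  policy_of @` [set eta | occupancy_measure g eta /\ occupancy_value eta = c].
Proof.
move=> gpos hd0 reach; apply/seteqP; split=> [pi [pp <-]|_ [eta [occ <-] <-]].
  by have [eta [occ val pi_eq]] := occupancy_of_policy gpos hd0 reach pp; exists eta.
by split; [exact: policy_of_pos occ.1 | exact: J_policy_of].
Qed.
End occupancy.
End policies.

Unset Implicit Arguments.

Theorem mainTheorem8 (R : realType) (n m : nat) (hm : (1 < m)%N)
  (d0 : 'I_n -> R) (Rw : 'I_n -> 'I_m -> R) (gamma : R)
  (hd0 : is_dist d0) (hg0 : 0 <= gamma) (hg1 : gamma < 1)
  (T : 'I_n -> 'I_m -> 'I_n -> R) (hT : is_transition T)
  (hreach : all_reachable d0 T) (c : R) :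
  connected [set pi : 'M[R]_(n, m) | is_pos_policy pi /\ J d0 Rw gamma T pi = c].
Proof.
have m_gt0 : (0 < m)%N by exact: ltn_trans hm.
move: hg0; rewrite le_eqVlt => /orP[/eqP g0|gpos].
  rewrite -g0; apply: convex_connected => pi1 pi2 t [pp1 J1] [pp2 J2] t01.
  by split; [exact: pos_policy_segment | exact: myopic_level_segment].
rewrite (level_set_policy_of Rw hT (ltW gpos) hg1 m_gt0 c gpos hd0 hreach).
apply: connected_continuous_connected.
  apply: convex_connected => eta1 eta2 t [occ1 v1] [occ2 v2] t01.
  split; first exact: occupancy_measure_segment.
  by rewrite occupancy_value_lincomb v1 v2 -mulrDl subrK mul1r.
apply: continuous_in_subspaceT => eta; rewrite inE => -[[eta_gt0 _] _].
exact: policy_of_continuous.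
Qed.
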